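(* Let $n>2k$, $k\ge t+3$, and let $\mathcal F\subseteq\binom{[n]}{k}$ be a $t$-intersecting family with $\tau_t(\mathcal F)=t+2$. Then for every $E\in\binom{[n]}{t+1}$, $$\left|\{T\in\mathcal T_t(\mathcal F): E\subseteq T\}\right|\le k-t+1.$$
   Context: A family is $t$-intersecting if any two members meet in at least $t$ elements. A $t$-cover of $\mathcal F$ is a set $S\subseteq[n]$ with $|S\cap F|\ge t$ for all $F\in\mathcal F$; $\tau_t(\mathcal F)$ is the minimum size of a $t$-cover, and $\mathcal T_t(\mathcal F)$ is the set of all $t$-covers of $\mathcal F$ of size $\tau_t(\mathcal F)$. *)

From mathcomp Require Import all_boot.
Set Implicit Arguments. Unset Strict Implicit. Unset Printing Implicit Defensive.

Definition k_uniform (n k : nat) (F : {set {set 'I_n}}) : bool :=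
  [forall A in F, #|A| == k].

Definition t_intersecting (n t : nat) (F : {set {set 'I_n}}) : bool :=
  [forall A in F, forall B in F, t <= #|A :&: B|].

Definition t_cover (n t : nat) (F : {set {set 'I_n}}) (S : {set 'I_n}) : bool :=
  [forall A in F, t <= #|S :&: A|].

(* tau_t(F): the minimum size of a t-cover (n.+1 if there is none,
   which cannot happen when the minimum is attained as below). *)
Definition tau_t (n t : nat) (F : {set {set 'I_n}}) : nat :=
  \big[minn/n.+1]_(S : {set 'I_n} | t_cover t F S) #|S|.

Definition T_t (n t : nat) (F : {set {set 'I_n}}) : {set {set 'I_n}} :=
  [set S : {set 'I_n} | t_cover t F S && (#|S| == tau_t t F)].

From mathcomp Require Import all_boot.
From mathcomp Require Import zify.

Set Implicit Arguments.
Unset Strict Implicit.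
Unset Printing Implicit Defensive.

(* Since [tau_t t F] exceeds [#|E|], the set [E] is not a t-cover: some member
   [A] of [F] meets [E] in fewer than [t] points.  A minimum t-cover [T]
   containing [E] is [x |: E] for a single [x], and covering [A] forces
   [x \in A :\: E] and [#|E :&: A| = t - 1].  Hence there are at most
   [#|A :\: E| = k - (t - 1)] such covers. *)

Lemma bigmin_leq (I : eqType) (r : seq I) (P : pred I) (F : I -> nat) idx j :
  j \in r -> P j -> \big[minn/idx]_(i <- r | P i) F i <= F j.
Proof.
elim: r => //= a r IHr; rewrite inE big_cons => /orP[/eqP<- -> | jr Pj].
  exact: geq_minl.
case: (P a); last exact: IHr.
exact: leq_trans (geq_minr _ _) (IHr jr Pj).
Qed.

Lemma tau_t_le_cover n t (F : {set {set 'I_n}}) (S : {set 'I_n}) :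
  t_cover t F S -> tau_t t F <= #|S|.
Proof. exact/bigmin_leq/mem_index_enum. Qed.

Lemma not_t_cover_small n t (F : {set {set 'I_n}}) (S : {set 'I_n}) :
  #|S| < tau_t t F -> exists2 A, A \in F & #|S :&: A| < t.
Proof.
move=> ltS; have /forall_inPn[A AF]: ~~ t_cover t F S.
  by apply: contraTN ltS => /tau_t_le_cover; rewrite leqNgt.
by rewrite -ltnNge; exists A.
Qed.

Lemma superset_card_succ (T : finType) (E S : {set T}) :
  E \subset S -> #|S| = #|E|.+1 -> exists2 x, x \notin E & S = x |: E.
Proof.
move=> sES cardS.
have /cards1P[x defSE]: #|S :\: E| == 1.
  by rewrite cardsD (setIidPr sES) cardS subSnn.
have xSE : x \in S :\: E by rewrite defSE set11.
exists x; first by move: xSE; rewrite inE => /andP[].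
by rewrite -defSE setUC -{1}(setID S E) (setIidPr sES).
Qed.

Section CoversThroughNonCoveringSet.

Variables (T : finType) (t : nat) (A E : {set T}).
Hypothesis EA_lt : #|E :&: A| < t.

Lemma cover_extension_mem x :
  t <= #|(x |: E) :&: A| -> x \in A :\: E /\ #|E :&: A| = t.-1.
Proof.
rewrite setIUl => tle.
have xA : x \in A.
  apply: contraLR tle => xNA; rewrite -ltnNge.
  suff /eqP -> : [set x] :&: A == set0 by rewrite set0U.
  by rewrite setI_eq0 disjoints1.
have xNE : x \notin E.
  apply: contraTN tle => xE; rewrite -ltnNge (setUidPr _) //.
  by rewrite setSI // sub1set.
split; first by rewrite inE xNE.
move: tle; rewrite (setIidPl _) ?sub1set // cardsU1 inE (negbTE xNE) /=; lia.
Qed.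

Lemma card_cover_extensions (C : {set {set T}}) :
  (forall S, S \in C -> exists2 x, t <= #|(x |: E) :&: A| & S = x |: E) ->
  #|C| <= #|A| - t.-1.
Proof.
move=> defC; have [-> | [S0 S0C]] := set_0Vmem C; first by rewrite cards0.
have [x0 /cover_extension_mem[_ cardEA] _] := defC S0 S0C.
have sub : C \subset [set x |: E | x in A :\: E].
  apply/subsetP => S /defC[x /cover_extension_mem[xAE _] ->].
  exact: imset_f.
apply: leq_trans (subset_leq_card sub) _.
by rewrite (leq_trans (leq_imset_card _ _)) // cardsD setIC cardEA.
Qed.

End CoversThroughNonCoveringSet.

Theorem mainTheorem7 (n k t : nat) (F : {set {set 'I_n}}) :
  2 * k < n -> t + 3 <= k ->
  k_uniform k F -> t_intersecting t F -> tau_t t F = t + 2 ->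
  forall E : {set 'I_n}, #|E| = t + 1 ->
    #|[set T in T_t t F | E \subset T]| <= k - t + 1.
Proof.
move=> _ _ unifF _ tauF E cardE.
have [A AF EA_lt] : exists2 A, A \in F & #|E :&: A| < t.
  by apply: not_t_cover_small; rewrite tauF cardE addn1 addn2.
have cardA : #|A| = k by apply/eqP; move/forall_inP: unifF; apply.
suff : #|[set T in T_t t F | E \subset T]| <= #|A| - t.-1 by rewrite cardA; lia.
apply: (card_cover_extensions EA_lt) => T.
rewrite !inE => /andP[/andP[coverT /eqP cardT] sET].
have [x _ defT] : exists2 x, x \notin E & T = x |: E.
  by apply: superset_card_succ sET _; rewrite cardT tauF cardE addn1 addn2.
exists x => //; rewrite -defT.
by move/forall_inP: coverT; apply.
Qed.
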